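(* Let $A$ be a ring and $\mathfrak{I}$ an ideal of $A$ such that $A$ is separated and complete for the $\mathfrak{I}$-adic topology. Let ${}^*A$ be the ultrapower of $A$ with respect to a nonprincipal ultrafilter on $\mathbb{N}$ and $\mu(0):=\bigcap_{n>0}{}^*(\mathfrak{I}^n)$. Then: (i) $\varprojlim_n{}^*A/{}^*(\mathfrak{I}^{n+1})\cong{}^*A/\mu(0)$; (ii) there is a natural injective ring homomorphism $\widehat{A}\hookrightarrow{}^*A/\mu(0)$; (iii) this homomorphism is an isomorphism $\widehat{A}\cong{}^*A/\mu(0)$ if and only if $A/\mathfrak{I}^{n+1}$ is finite for every $n\in\mathbb{N}$.
   Context: $\widehat{A}=\varprojlim_n A/\mathfrak{I}^{n+1}$ is the $\mathfrak{I}$-adic completion (isomorphic to $A$ by assumption). ${}^*(\mathfrak{I}^n)$ denotes the nonstandard extension (ultrapower) of the ideal $\mathfrak{I}^n$, an ideal of ${}^*A$; the map in (ii) is induced by the diagonal embedding $A\to{}^*A$. *)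

From mathcomp Require Import all_boot all_algebra.
Set Implicit Arguments. Unset Strict Implicit. Unset Printing Implicit Defensive.
Import GRing.Theory.
Local Open Scope ring_scope.

Definition is_ideal (A : comPzRingType) (I : A -> Prop) : Prop :=
  I 0 /\ (forall x y, I x -> I y -> I (x + y)) /\ (forall a x, I x -> I (a * x)).

Definition ideal_pow (A : comPzRingType) (I : A -> Prop) (n : nat) (x : A) : Prop :=
  exists (k : nat) (c : 'I_k -> A) (f : 'I_k -> 'I_n -> A),
    (forall i j, I (f i j)) /\ x = \sum_(i < k) c i * \prod_(j < n) f i j.

Definition adic_separated (A : comPzRingType) (I : A -> Prop) : Prop :=
  forall x : A, (forall n, ideal_pow I n x) -> x = 0.

(* A is complete for the I-adic topology: every compatible family
   (a_n) in lim A/I^(n+1) comes from an element of A. *)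
Definition adic_complete (A : comPzRingType) (I : A -> Prop) : Prop :=
  forall a : nat -> A, (forall n, ideal_pow I n.+1 (a n.+1 - a n)) ->
    exists x : A, forall n, ideal_pow I n.+1 (x - a n).

Definition ultrafilter_nat (U : (nat -> Prop) -> Prop) : Prop :=
  [/\ U (fun _ => True), ~ U (fun _ => False),
      (forall S T : nat -> Prop, U S -> (forall k, S k -> T k) -> U T),
      (forall S T : nat -> Prop, U S -> U T -> U (fun k => S k /\ T k)) &
      (forall S : nat -> Prop, U S \/ U (fun k => ~ S k))].

Definition nonprincipal (U : (nat -> Prop) -> Prop) : Prop :=
  ~ exists n : nat, forall S : nat -> Prop, U S <-> S n.

(* The ultrapower *A is represented by sequences nat -> A, with two
   representatives identified when they agree U-almost everywhere.
   The nonstandard extension *S of a subset S of A: *)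
Definition star_set (A : Type) (U : (nat -> Prop) -> Prop) (S : A -> Prop)
  (x : nat -> A) : Prop := U (fun k => S (x k)).

Definition mu0 (A : comPzRingType) (U : (nat -> Prop) -> Prop) (I : A -> Prop)
  (x : nat -> A) : Prop :=
  forall n : nat, (0 < n)%N -> star_set U (ideal_pow I n) x.

Definition hsub (A : comPzRingType) (x y : nat -> A) : nat -> A := fun k => x k - y k.

Definition diag (A : Type) (a : A) : nat -> A := fun _ => a.

Definition finite_quotient (A : comPzRingType) (J : A -> Prop) : Prop :=
  exists s : seq A, forall a : A, exists2 b, b \in s & J (a - b).

From mathcomp Require Import all_boot all_algebra zify.
From Stdlib Require Import Classical ClassicalEpsilon.
Set Implicit Arguments. Unset Strict Implicit.
Import GRing.Theory.
Local Open Scope ring_scope.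

(* The ideals *(I^(n+1)) form a decreasing chain, and (i) is countable
   saturation of the ultrapower: a compatible family (x_n) is glued
   coordinatewise, taking at coordinate k the member x_N with N the last
   index (at most k) up to which the family is compatible at k.  For (ii), a
   constant sequence lies in *(I^n) iff its value lies in I^n, and A is
   separated.  For (iii), if every A/I^(n+1) is finite, a sequence falls
   U-almost everywhere into a single class mod I^(n+1); refining class by
   class gives a compatible family whose limit in the complete ring A
   represents the sequence modulo mu(0).  If some A/I^(n+1) is infinite, a
   sequence of pairwise incongruent elements congruent to a constant almost
   everywhere would be constant on a U-large set, which a nonprincipal
   ultrafilter forbids. *)

Section IdealPow.
Variables (A : comPzRingType) (I : A -> Prop).

Lemma ideal_pow0 n : ideal_pow I n 0.
Proof.
exists 0%N, (fun _ => 0), (fun _ _ => 0); split; [by case | by rewrite big_ord0].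
Qed.

Lemma ideal_pow_full x : ideal_pow I 0 x.
Proof.
exists 1%N, (fun _ => x), (fun _ _ => 0); split; first by move=> ? [].
by rewrite big_ord1 big_ord0 mulr1.
Qed.

Lemma ideal_powD n x y :
  ideal_pow I n x -> ideal_pow I n y -> ideal_pow I n (x + y).
Proof.
move=> [k1 [c1 [f1 [If1 ->]]]] [k2 [c2 [f2 [If2 ->]]]].
exists (k1 + k2)%N,
  (fun i => match split i with inl i1 => c1 i1 | inr i2 => c2 i2 end),
  (fun i => match split i with inl i1 => f1 i1 | inr i2 => f2 i2 end); split.
  by move=> i j; case: (split i).
rewrite big_split_ord; congr (_ + _); apply: eq_bigr => i _.
  by rewrite (unsplitK (inl i)).
by rewrite (unsplitK (inr i)).
Qed.

Lemma ideal_powN n x : ideal_pow I n x -> ideal_pow I n (- x).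
Proof.
move=> [k [c [f [If ->]]]]; exists k, (fun i => - c i), f; split => //.
by rewrite -sumrN; apply: eq_bigr => i _; rewrite mulNr.
Qed.

Lemma ideal_powS n x : ideal_pow I n.+1 x -> ideal_pow I n x.
Proof.
move=> [k [c [f [If ->]]]].
exists k, (fun i => c i * f i ord_max), (fun i j => f i (widen_ord (leqnSn n) j)).
split => //; apply: eq_bigr => i _.
by rewrite big_ord_recr -mulrA [f i _ * _]mulrC.
Qed.

Lemma ideal_pow_le m n x : (m <= n)%N -> ideal_pow I n x -> ideal_pow I m x.
Proof.
by move=> /subnK <-; elim: (n - m)%N => [|d IH] //= /ideal_powS.
Qed.

Lemma ideal_pow_subC n x y : ideal_pow I n (x - y) -> ideal_pow I n (y - x).
Proof. by move=> /ideal_powN; rewrite opprB. Qed.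

Lemma ideal_pow_sub_trans n x y z :
  ideal_pow I n (x - y) -> ideal_pow I n (y - z) -> ideal_pow I n (x - z).
Proof. by move=> Ixy Iyz; rewrite -[x](subrK y) -addrA; apply: ideal_powD. Qed.

Lemma ideal_pow_telescope (z : nat -> A) n N : (n <= N)%N ->
  (forall m, (n <= m)%N -> (m < N)%N -> ideal_pow I m.+1 (z m.+1 - z m)) ->
  ideal_pow I n.+1 (z N - z n).
Proof.
elim: N => [|N IH]; first by rewrite leqn0 => /eqP-> _; rewrite subrr; apply: ideal_pow0.
rewrite leq_eqVlt ltnS => /orP[/eqP-> _|le_nN steps].
  by rewrite subrr; apply: ideal_pow0.
apply: (@ideal_pow_sub_trans _ _ (z N)); last by apply: IH => // m *; apply: steps; lia.
by apply: (ideal_pow_le (n := N.+1)) => //; apply: steps.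
Qed.

End IdealPow.

Lemma infinite_quotient_sequence (A : comPzRingType) (J : A -> Prop) :
  ~ finite_quotient J -> exists x : nat -> A, forall j k, (j < k)%N -> ~ J (x k - x j).
Proof.
move=> infJ.
have fresh (s : seq A) : exists a, forall b, b \in s -> ~ J (a - b).
  apply: NNPP => none; apply: infJ; exists s => a.
  apply: NNPP => nob; apply: none; exists a => b bs Jab; by apply: nob; exists b.
pose next s := proj1_sig (constructive_indefinite_description _ (fresh s)).
pose fix prefix k := if k is k'.+1 then next (prefix k') :: prefix k' else [::].
exists (fun k => next (prefix k)) => j k lt_jk.
apply: (proj2_sig (constructive_indefinite_description _ (fresh (prefix k)))).
elim: k lt_jk => // k IH; rewrite ltnS leq_eqVlt /= inE => /orP[/eqP->|/IH->].
  by rewrite eqxx.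
by rewrite orbT.
Qed.

Definition decb (P : Prop) : bool :=
  if excluded_middle_informative P then true else false.

Lemma decbP (P : Prop) : reflect P (decb P).
Proof. by rewrite /decb; case: excluded_middle_informative => H; constructor. Qed.

Section Ultrapower.
Variable U : (nat -> Prop) -> Prop.
Hypothesis U_ultra : ultrafilter_nat U.

Lemma uf_setT : U (fun _ => True).
Proof. by case: (U_ultra). Qed.

Lemma uf_sub (S T : nat -> Prop) : U S -> (forall k, S k -> T k) -> U T.
Proof. by case: (U_ultra) => _ _ U_sub _ _; apply: U_sub. Qed.

Lemma uf_and (S T : nat -> Prop) : U S -> U T -> U (fun k => S k /\ T k).
Proof. by case: (U_ultra) => _ _ _ cap _; apply: cap. Qed.

Lemma uf_witness (S : nat -> Prop) : U S -> exists k, S k.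
Proof.
case: (U_ultra) => _ U_not0 U_sub _ _ US; apply: NNPP => noS.
by apply: U_not0; apply: (U_sub _ _ US) => k Sk; apply: noS; exists k.
Qed.

Lemma uf_cover (T : eqType) (P : T -> nat -> Prop) (s : seq T) (S : nat -> Prop) :
  U S -> (forall k, S k -> exists2 b, b \in s & P b k) ->
  exists b, U (fun k => S k /\ P b k).
Proof.
case: (U_ultra) => _ _ _ _ ultra.
elim: s S => [|b s IH] S US cover; first by have [k /cover[]] := uf_witness US.
have [USb|USnb] := ultra (fun k => S k /\ P b k); first by exists b.
have [|c Uc] := IH _ (uf_and US USnb).
  move=> k [Sk nSPbk]; have [c c_in Pck] := cover k Sk.
  move: c_in; rewrite inE => /orP[/eqP Ecb|cs]; last by exists c.
  by case: nSPbk; rewrite -Ecb.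
by exists c; apply: (uf_sub Uc) => k [[Sk _] Pck]; split.
Qed.

Lemma star_set_diag (T : Type) (S : T -> Prop) (a : T) :
  star_set U S (diag a) <-> S a.
Proof. by split=> [/uf_witness[]//|Sa]; apply: (uf_sub uf_setT). Qed.

Hypothesis U_nonprincipal : nonprincipal U.

Lemma uf_singletonN j : ~ U (fun k => k = j).
Proof.
move=> Uj; apply: U_nonprincipal; exists j => S.
split=> [US|Sj]; last by apply: (uf_sub Uj) => k ->.
by have [k [Sk <-]] := uf_witness (uf_and US Uj).
Qed.

Lemma uf_geq n : U (fun k => (n <= k)%N).
Proof.
elim: n => [|n IH]; first exact: (uf_sub uf_setT).
case: (U_ultra) => _ _ _ _ ultra.
have [Un|U_neq] := ultra (fun k => k = n); first by case: (uf_singletonN Un).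
by apply: (uf_sub (uf_and IH U_neq)) => k [le_nk neq_kn]; lia.
Qed.

Variables (A : comPzRingType) (I : A -> Prop).

Lemma star_adic_complete (x : nat -> nat -> A) :
  (forall n, star_set U (ideal_pow I n.+1) (hsub (x n.+1) (x n))) ->
  exists y : nat -> A, forall n, star_set U (ideal_pow I n.+1) (hsub y (x n)).
Proof.
move=> compat.
pose good n k := (n <= k)%N /\
  forall m, (m < n)%N -> ideal_pow I m.+1 (x m.+1 k - x m k).
have U_good n : U (good n).
  apply: uf_and (uf_geq n) _; elim: n => [|n IH]; first exact: (uf_sub uf_setT).
  apply: (uf_sub (uf_and IH (compat n))) => k [good_k Ik] m.
  by rewrite ltnS leq_eqVlt => /orP[/eqP-> //|]; apply: good_k.
have bad k : exists n, ~~ decb (good n.+1 k).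
  by exists k; apply/decbP => -[]; rewrite ltnn.
exists (fun k => x (ex_minn (bad k)) k) => n.
apply: (uf_sub (U_good n.+1)) => k [le_nk good_k]; rewrite /hsub.
case: ex_minnP => N /decbP bad_N min_N.
have lt_nN : (n < N)%N.
  rewrite ltnNge; apply/negP => le_Nn; apply: bad_N.
  by split=> [|m lt_mN]; [lia | apply: good_k; lia].
(* [N] is the least index with [k] outside [good N.+1]. *)
have [_ good_N] : good N k.
  apply: NNPP; case: N lt_nN {bad_N} min_N => // N _ min_N not_good.
  by have := min_N N (introN (decbP _) not_good); rewrite ltnn.
apply: (ideal_pow_telescope (z := fun m => x m k) (ltnW lt_nN)) => m _.
exact: good_N.
Qed.

Lemma diag_mu0_inj (a b : A) :
  adic_separated I -> mu0 U I (hsub (diag a) (diag b)) -> a = b.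
Proof.
move=> sepI mu_ab; apply/eqP; rewrite -subr_eq0; apply/eqP/sepI => -[|n].
  exact: ideal_pow_full.
exact/(star_set_diag (ideal_pow I n.+1) (a - b))/(mu_ab n.+1).
Qed.

Lemma finite_quotients_of_surjective :
  (forall x : nat -> A, exists a : A, mu0 U I (hsub x (diag a))) ->
  forall n, finite_quotient (ideal_pow I n.+1).
Proof.
move=> surj n; apply: NNPP => /infinite_quotient_sequence[x x_sep].
have [a /(_ n.+1 isT) Ua] := surj x.
have [j Ija] := uf_witness Ua.
apply: (@uf_singletonN j); apply: (uf_sub Ua) => k Ika.
have Ikj := ideal_pow_sub_trans Ika (ideal_pow_subC Ija).
case: (ltngtP k j) => [lt_kj|lt_jk|//]; exfalso.
  exact: (x_sep _ _ lt_kj (ideal_pow_subC Ikj)).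
exact: (x_sep _ _ lt_jk Ikj).
Qed.

Lemma surjective_of_finite_quotients : adic_complete I ->
  (forall n, finite_quotient (ideal_pow I n.+1)) ->
  forall x : nat -> A, exists a : A, mu0 U I (hsub x (diag a)).
Proof.
move=> completeI fin x.
pose near n b k := ideal_pow I n.+1 (x k - b).
have refine n b :
    {b' | U (near n b) -> U (near n.+1 b') /\ ideal_pow I n.+1 (b' - b)}.
  apply: constructive_indefinite_description.
  have [Unb|] := classic (U (near n b)); last by exists 0.
  have [s cover] := fin n.+1.
  have [b' Ub'] := uf_cover (P := near n.+1) Unb (fun k _ => cover (x k)).
  exists b' => _; split; first by apply: (uf_sub Ub') => k [].
  have [k [near_b near_b']] := uf_witness Ub'.
  exact: ideal_pow_sub_trans (ideal_pow_subC (ideal_powS near_b')) near_b.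
have [b0 Ub0] : exists b, U (near 0%N b).
  have [s cover] := fin 0%N.
  have [b Ub] := uf_cover (P := near 0%N) uf_setT (fun k _ => cover (x k)).
  by exists b; apply: (uf_sub Ub) => k [].
pose fix a n := if n is n'.+1 then sval (refine n' (a n')) else b0.
have U_a n : U (near n (a n)).
  by elim: n => //= n IH; apply: (proj2_sig (refine n (a n)) IH).1.
have [y y_lim] := completeI a (fun n => (proj2_sig (refine n (a n)) (U_a n)).2).
exists y => -[//|n] _; apply: (uf_sub (U_a n)) => k near_k.
exact: ideal_pow_sub_trans near_k (ideal_pow_subC (y_lim n)).
Qed.

End Ultrapower.

Theorem corollary2p6p3 (A : comPzRingType) (I : A -> Prop)
  (U : (nat -> Prop) -> Prop) :
  is_ideal I -> adic_separated I -> adic_complete I ->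
  ultrafilter_nat U -> nonprincipal U ->
  (* (i) the natural map *A/mu(0) -> lim_n *A/*(I^(n+1)) is bijective *)
  ((forall x : nat -> A,
      (forall n, star_set U (ideal_pow I n.+1) x) <-> mu0 U I x) /\
   (forall x : nat -> nat -> A,
      (forall n, star_set U (ideal_pow I n.+1) (hsub (x n.+1) (x n))) ->
      exists y : nat -> A, forall n, star_set U (ideal_pow I n.+1) (hsub y (x n))))
  /\
  (* (ii) the ring map A (= \hat A) -> *A/mu(0) induced by the diagonal is injective *)
  (forall a b : A, mu0 U I (hsub (diag a) (diag b)) -> a = b)
  /\
  (* (iii) it is surjective iff every A/I^(n+1) is finite *)
  ((forall x : nat -> A, exists a : A, mu0 U I (hsub x (diag a))) <->
   (forall n : nat, finite_quotient (ideal_pow I n.+1))).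
Proof.
move=> _ sepI completeI U_ultra U_nonprincipal; split; [split|split].
- by move=> x; split=> [star_x [|n] // _|mu_x n]; apply: mu_x.
- exact: star_adic_complete.
- by move=> a b; apply: diag_mu0_inj.
- split; first exact: finite_quotients_of_surjective.
  exact: surjective_of_finite_quotients.
Qed.
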